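(* Consider Configuration II (two agents in mutual beacon-referenced pursuit of a single beacon at the origin, $b=0$) with parameters $\mu>0$, $\lambda\in(0,1)$, $a\in[-1,1]$ and $a_0\in[-1,1]\setminus\{0\}$. (a) If $(1-\lambda)a+\lambda a_0<0$, a circling equilibrium exists with $$\bar x_1=\bar x_2=0,\ \bar x_{1b1}=\bar x_{2b2}=0,\ \tilde x=-1,\ \rho_{1b1}=\rho_{2b2}=\frac{1}{-\mu\bigl((1-\lambda)a+\lambda a_0\bigr)},\ \rho=2\rho_{1b1}.$$ (b) If $(1-\lambda)a+\lambda a_0<0$, $a_0<0$ and $a>0$, a circling equilibrium exists with $$\bar x_1=\bar x_2=0,\ \bar x_{1b1}=\bar x_{2b2}=0,\ \tilde x=1,\ \rho_{1b1}=\rho_{2b2}=\frac{\lambda a_0}{\mu\bigl((1-\lambda)^2a^2-\lambda^2a_0^2\bigr)},\ \rho=\frac{-2(1-\lambda)a}{\mu\bigl((1-\lambda)^2a^2-\lambda^2a_0^2\bigr)}.$$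
   Context: Two-agent setup: beacons $\mathbf r_{b1}=(0,0,-b)$, $\mathbf r_{b2}=(0,0,b)$ with $b\ge0$, $\hat{\mathbf b}=\mathbf r_{b2}-\mathbf r_{b1}=(0,0,2b)$. Agents $i=1,2$ have positions $\mathbf r_i\in\mathbb R^3$ and unit velocities $\mathbf x_i$. Let $\mathbf r=\mathbf r_1-\mathbf r_2$, $\mathbf r_{1b1}=\mathbf r_1-\mathbf r_{b1}$, $\mathbf r_{2b2}=\mathbf r_2-\mathbf r_{b2}$, $\rho=|\mathbf r|$, $\rho_{1b1}=|\mathbf r_{1b1}|$, $\rho_{2b2}=|\mathbf r_{2b2}|$, $\bar x_1=\mathbf x_1\cdot\mathbf r/\rho$, $\bar x_2=-\mathbf x_2\cdot\mathbf r/\rho$, $\bar x_{1b1}=\mathbf x_1\cdot\mathbf r_{1b1}/\rho_{1b1}$, $\bar x_{2b2}=\mathbf x_2\cdot\mathbf r_{2b2}/\rho_{2b2}$, $\tilde x=\mathbf x_1\cdot\mathbf x_2$, $\hat r_i=\mathbf r_i\cdot\hat{\mathbf b}$, $\hat x_i=\mathbf x_i\cdot\hat{\mathbf b}$. With gain $\mu>0$, weight $\lambda\in(0,1)$, common agent-bearing parameter $a\in[-1,1]$ and common beacon-bearing parameter $a_0\in[-1,1]$, the closed-loop dynamics are $\dot{\mathbf r}_i=\mathbf x_i$ and $$\dot{\mathbf x}_1=-(1-\lambda)\mu(\bar x_1-a)\Bigl(\tfrac{\mathbf r}{\rho}-\bar x_1\mathbf x_1\Bigr)-\lambda\mu(\bar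 x_{1b1}-a_0)\Bigl(\tfrac{\mathbf r_{1b1}}{\rho_{1b1}}-\bar x_{1b1}\mathbf x_1\Bigr),$$ $$\dot{\mathbf x}_2=-(1-\lambda)\mu(\bar x_2-a)\Bigl(-\tfrac{\mathbf r}{\rho}-\bar x_2\mathbf x_2\Bigr)-\lambda\mu(\bar x_{2b2}-a_0)\Bigl(\tfrac{\mathbf r_{2b2}}{\rho_{2b2}}-\bar x_{2b2}\mathbf x_2\Bigr).$$ The shape variables $(\bar x_1,\bar x_2,\bar x_{1b1},\bar x_{2b2},\tilde x,\rho,\rho_{1b1},\rho_{2b2},\hat r_1,\hat r_2,\hat x_1,\hat x_2)$ have time derivatives along this flow that depend only on the shape variables. A circling equilibrium is a state with $\rho,\rho_{1b1},\rho_{2b2}>0$ at which the time derivatives of all shape variables vanish. Configuration II is the case $b=0$ (single beacon at the origin, so $\hat{\mathbf b}=\mathbf 0$ and $\hat r_i=\hat x_i=0$). *)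

From Stdlib Require Import Reals Lra List.
Open Scope R_scope.

Record V3 := mkV { vx : R; vy : R; vz : R }.

Definition vadd (u v : V3) : V3 := mkV (vx u + vx v) (vy u + vy v) (vz u + vz v).
Definition vsub (u v : V3) : V3 := mkV (vx u - vx v) (vy u - vy v) (vz u - vz v).
Definition vscale (c : R) (v : V3) : V3 := mkV (c * vx v) (c * vy v) (c * vz v).
Definition vdot (u v : V3) : R := vx u * vx v + vy u * vy v + vz u * vz v.
Definition vnorm (v : V3) : R := sqrt (vdot v v).

Record State := mkS { sr1 : V3; sr2 : V3; sx1 : V3; sx2 : V3 }.

Definition sadd (s d : State) : State :=
  mkS (vadd (sr1 s) (sr1 d)) (vadd (sr2 s) (sr2 d))
      (vadd (sx1 s) (sx1 d)) (vadd (sx2 s) (sx2 d)).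
Definition sscale (c : R) (s : State) : State :=
  mkS (vscale c (sr1 s)) (vscale c (sr2 s)) (vscale c (sx1 s)) (vscale c (sx2 s)).

Definition rb1 (b : R) : V3 := mkV 0 0 (- b).
Definition rb2 (b : R) : V3 := mkV 0 0 b.
Definition bhat (b : R) : V3 := vsub (rb2 b) (rb1 b).

Definition rrel (s : State) : V3 := vsub (sr1 s) (sr2 s).
Definition r1b1 (b : R) (s : State) : V3 := vsub (sr1 s) (rb1 b).
Definition r2b2 (b : R) (s : State) : V3 := vsub (sr2 s) (rb2 b).

Definition rho (s : State) : R := vnorm (rrel s).
Definition rho1b1 (b : R) (s : State) : R := vnorm (r1b1 b s).
Definition rho2b2 (b : R) (s : State) : R := vnorm (r2b2 b s).
Definition barx1 (s : State) : R := vdot (sx1 s) (rrel s) / rho s.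
Definition barx2 (s : State) : R := - vdot (sx2 s) (rrel s) / rho s.
Definition barx1b1 (b : R) (s : State) : R := vdot (sx1 s) (r1b1 b s) / rho1b1 b s.
Definition barx2b2 (b : R) (s : State) : R := vdot (sx2 s) (r2b2 b s) / rho2b2 b s.
Definition tildex (s : State) : R := vdot (sx1 s) (sx2 s).
Definition hatr1 (b : R) (s : State) : R := vdot (sr1 s) (bhat b).
Definition hatr2 (b : R) (s : State) : R := vdot (sr2 s) (bhat b).
Definition hatx1 (b : R) (s : State) : R := vdot (sx1 s) (bhat b).
Definition hatx2 (b : R) (s : State) : R := vdot (sx2 s) (bhat b).

Definition shape_vars (b : R) : list (State -> R) :=
  barx1 :: barx2 :: barx1b1 b :: barx2b2 b :: tildex :: rho :: rho1b1 b
  :: rho2b2 b :: hatr1 b :: hatr2 b :: hatx1 b :: hatx2 b :: nil.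

Definition xdot1 (mu lam a a0 b : R) (s : State) : V3 :=
  vadd
    (vscale (- (1 - lam) * mu * (barx1 s - a))
       (vsub (vscale (/ rho s) (rrel s)) (vscale (barx1 s) (sx1 s))))
    (vscale (- lam * mu * (barx1b1 b s - a0))
       (vsub (vscale (/ rho1b1 b s) (r1b1 b s)) (vscale (barx1b1 b s) (sx1 s)))).

Definition xdot2 (mu lam a a0 b : R) (s : State) : V3 :=
  vadd
    (vscale (- (1 - lam) * mu * (barx2 s - a))
       (vsub (vscale (- / rho s) (rrel s)) (vscale (barx2 s) (sx2 s))))
    (vscale (- lam * mu * (barx2b2 b s - a0))
       (vsub (vscale (/ rho2b2 b s) (r2b2 b s)) (vscale (barx2b2 b s) (sx2 s)))).

Definition field (mu lam a a0 b : R) (s : State) : State :=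
  mkS (sx1 s) (sx2 s) (xdot1 mu lam a a0 b s) (xdot2 mu lam a a0 b s).

(* Time derivative of a function f of the state along the flow, at state s,
   is the directional derivative of f at s in the direction of the field;
   "f' = 0 at s" is stated as derivable_pt_lim of t |-> f (s + t F(s)) at 0
   with value 0. *)
Definition time_deriv_zero (mu lam a a0 b : R) (f : State -> R) (s : State) : Prop :=
  derivable_pt_lim (fun t => f (sadd s (sscale t (field mu lam a a0 b s)))) 0 0.

Definition circling_equilibrium (mu lam a a0 b : R) (s : State) : Prop :=
  vnorm (sx1 s) = 1 /\ vnorm (sx2 s) = 1 /\
  0 < rho s /\ 0 < rho1b1 b s /\ 0 < rho2b2 b s /\
  Forall (fun f => time_deriv_zero mu lam a a0 b f s) (shape_vars b).

(* At b = 0 every shape variable is a dot product, a norm, or a dot product divided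
   by a norm, of vectors that move affinely along the direction of the vector field.
   Hence all time derivatives vanish once a few first-order orthogonality relations
   hold.  Where the bearing terms vanish, the acceleration of each agent is
   mu ((1 - lam) a r / rho + lam a0 r_ibi / rho_ibi), and those relations become
   polynomial identities in the radii.  They are met by antipodal agents
   counter-rotating in a plane about the beacon (case (a)), and by agents moving in
   parallel, perpendicular to the plane containing them and the beacon (case (b));
   solving the identities gives the stated radii. *)
From Stdlib Require Import Reals Lra List.
From Coquelicot Require Import Coquelicot.
Open Scope R_scope.

Definition vline (u0 u1 : V3) (t : R) : V3 := vadd u0 (vscale t u1).

Lemma derivable_pt_lim_vdot_vline u0 u1 v0 v1 :
  derivable_pt_lim (fun t => vdot (vline u0 u1 t) (vline v0 v1 t)) 0
    (vdot u1 v0 + vdot u0 v1).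
Proof.
  apply is_derive_Reals; destruct u0, u1, v0, v1.
  unfold vline, vdot, vadd, vscale; simpl.
  auto_derive; [exact I | ring].
Qed.

Lemma derivable_pt_lim_vnorm_vline u0 u1 : 0 < vdot u0 u0 ->
  derivable_pt_lim (fun t => vnorm (vline u0 u1 t)) 0 (vdot u0 u1 / vnorm u0).
Proof.
  destruct u0 as [x y z], u1 as [x' y' z'].
  unfold vnorm, vline, vdot, vadd, vscale; simpl; intros Hpos.
  apply is_derive_Reals; auto_derive.
  - lra.
  - assert (Hsqrt : 0 < sqrt (x * x + y * y + z * z)) by (apply sqrt_lt_R0; lra).
    replace ((x + 0 * x') * (x + 0 * x') + (y + 0 * y') * (y + 0 * y')
             + (z + 0 * z') * (z + 0 * z')) with (x * x + y * y + z * z) by ring.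
    field; lra.
Qed.

Lemma derivable_pt_lim_div_stationary (f g : R -> R) (x g' : R) :
  f x = 0 -> derivable_pt_lim f x 0 -> derivable_pt_lim g x g' -> g x <> 0 ->
  derivable_pt_lim (fun t => f t / g t) x 0.
Proof.
  intros Hf0 Hf Hg Hgx.
  pose proof (derivable_pt_lim_div f g x 0 g' Hf Hg Hgx) as H.
  replace ((0 * g x - g' * f x) / (g x)²) with 0 in H
    by (rewrite Hf0; unfold Rsqr; field; exact Hgx).
  exact H.
Qed.

Lemma vdot_comm u v : vdot u v = vdot v u.
Proof. destruct u, v; unfold vdot; simpl; ring. Qed.

Lemma vdot_vsub_r u v w : vdot u (vsub v w) = vdot u v - vdot u w.
Proof. destruct u, v, w; unfold vdot, vsub; simpl; ring. Qed.

Lemma vnorm_pos u : 0 < vdot u u -> 0 < vnorm u.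
Proof. exact (sqrt_lt_R0 _). Qed.

Lemma vnorm_eq u c : 0 <= c -> vdot u u = c * c -> vnorm u = c.
Proof. intros Hc Hu; unfold vnorm; rewrite Hu; apply sqrt_square; exact Hc. Qed.

Lemma vline_0 u0 u1 : vline u0 u1 0 = u0.
Proof. destruct u0, u1; unfold vline, vadd, vscale; simpl; f_equal; ring. Qed.

Section AffinePaths.
Variables (g h : R -> V3) (u0 u1 v0 v1 : V3).
Hypothesis g_affine : forall t, g t = vline u0 u1 t.
Hypothesis h_affine : forall t, h t = vline v0 v1 t.

Lemma vdot_path_stationary : vdot u1 v0 + vdot u0 v1 = 0 ->
  derivable_pt_lim (fun t => vdot (g t) (h t)) 0 0.
Proof.
  intros H.
  pose proof (derivable_pt_lim_vdot_vline u0 u1 v0 v1) as D; rewrite H in D.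
  apply (derivable_pt_lim_ext _ _ _ _ (fun t => f_equal2 vdot (eq_sym (g_affine t))
                                                        (eq_sym (h_affine t))) D).
Qed.

Lemma vnorm_path_stationary : 0 < vdot v0 v0 -> vdot v0 v1 = 0 ->
  derivable_pt_lim (fun t => vnorm (h t)) 0 0.
Proof.
  intros Hv H.
  pose proof (derivable_pt_lim_vnorm_vline v0 v1 Hv) as D.
  rewrite H, Rdiv_0_l in D.
  apply (derivable_pt_lim_ext _ _ _ _ (fun t => f_equal vnorm (eq_sym (h_affine t))) D).
Qed.

Lemma div_vnorm_path_stationary (f : R -> R) : 0 < vdot v0 v0 ->
  f 0 = 0 -> derivable_pt_lim f 0 0 ->
  derivable_pt_lim (fun t => f t / vnorm (h t)) 0 0.
Proof.
  intros Hv Hf0 Hf.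
  apply (derivable_pt_lim_div_stationary _ _ _ _ Hf0 Hf
           (derivable_pt_lim_ext _ _ _ _ (fun t => f_equal vnorm (eq_sym (h_affine t)))
              (derivable_pt_lim_vnorm_vline v0 v1 Hv))).
  rewrite h_affine, vline_0; apply Rgt_not_eq, vnorm_pos, Hv.
Qed.

Lemma vdot_div_vnorm_path_stationary : 0 < vdot v0 v0 ->
  vdot u0 v0 = 0 -> vdot u1 v0 + vdot u0 v1 = 0 ->
  derivable_pt_lim (fun t => vdot (g t) (h t) / vnorm (h t)) 0 0.
Proof.
  intros Hv H0 H1.
  apply (div_vnorm_path_stationary (fun t => vdot (g t) (h t)) Hv).
  - rewrite g_affine, h_affine, !vline_0; exact H0.
  - exact (vdot_path_stationary H1).
Qed.

Lemma opp_vdot_div_vnorm_path_stationary : 0 < vdot v0 v0 ->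
  vdot u0 v0 = 0 -> vdot u1 v0 + vdot u0 v1 = 0 ->
  derivable_pt_lim (fun t => - vdot (g t) (h t) / vnorm (h t)) 0 0.
Proof.
  intros Hv H0 H1.
  apply (div_vnorm_path_stationary (fun t => - vdot (g t) (h t)) Hv).
  - rewrite g_affine, h_affine, !vline_0, H0; ring.
  - pose proof (derivable_pt_lim_opp _ _ _ (vdot_path_stationary H1)) as D.
    rewrite Ropp_0 in D; exact D.
Qed.

End AffinePaths.

Definition stationary_along (F : State) (f : State -> R) (s : State) : Prop :=
  derivable_pt_lim (fun t => f (sadd s (sscale t F))) 0 0.

Section StationaryShapeVariables.
Variables (s F : State).
Let x1 := sx1 s.
Let x2 := sx2 s.
Let r := rrel s.

Lemma rrel_along t : rrel (sadd s (sscale t F)) = vline r (rrel F) t.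
Proof.
  destruct s as [[] [] [] []], F as [[] [] [] []].
  unfold r, rrel, vline, sadd, sscale, vsub, vadd, vscale; simpl; f_equal; ring.
Qed.

Lemma sx1_along t : sx1 (sadd s (sscale t F)) = vline x1 (sx1 F) t.
Proof. reflexivity. Qed.

Lemma sx2_along t : sx2 (sadd s (sscale t F)) = vline x2 (sx2 F) t.
Proof. reflexivity. Qed.

Lemma stationary_barx1 : 0 < vdot r r -> vdot x1 r = 0 ->
  vdot (sx1 F) r + vdot x1 (rrel F) = 0 -> stationary_along F barx1 s.
Proof. exact (vdot_div_vnorm_path_stationary _ _ _ _ _ _ sx1_along rrel_along). Qed.

Lemma stationary_barx2 : 0 < vdot r r -> vdot x2 r = 0 ->
  vdot (sx2 F) r + vdot x2 (rrel F) = 0 -> stationary_along F barx2 s.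
Proof. exact (opp_vdot_div_vnorm_path_stationary _ _ _ _ _ _ sx2_along rrel_along). Qed.

Lemma stationary_tildex : vdot (sx1 F) x2 + vdot x1 (sx2 F) = 0 ->
  stationary_along F tildex s.
Proof. exact (vdot_path_stationary _ _ _ _ _ _ sx1_along sx2_along). Qed.

Lemma stationary_rho : 0 < vdot r r -> vdot r (rrel F) = 0 -> stationary_along F rho s.
Proof. exact (vnorm_path_stationary _ _ _ rrel_along). Qed.

Lemma stationary_const (f : State -> R) (c : R) : (forall s', f s' = c) ->
  stationary_along F f s.
Proof.
  intros Hf; unfold stationary_along.
  apply (derivable_pt_lim_ext (fct_cte c)); [intro t; rewrite Hf; reflexivity |].
  apply derivable_pt_lim_const.
Qed.

Variable b : R.
Let r1 := r1b1 b s.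
Let r2 := r2b2 b s.

Lemma r1b1_along t : r1b1 b (sadd s (sscale t F)) = vline r1 (sr1 F) t.
Proof.
  destruct s as [[] [] [] []], F as [[] [] [] []].
  unfold r1, r1b1, rb1, vline, sadd, sscale, vsub, vadd, vscale; simpl; f_equal; ring.
Qed.

Lemma r2b2_along t : r2b2 b (sadd s (sscale t F)) = vline r2 (sr2 F) t.
Proof.
  destruct s as [[] [] [] []], F as [[] [] [] []].
  unfold r2, r2b2, rb2, vline, sadd, sscale, vsub, vadd, vscale; simpl; f_equal; ring.
Qed.

Lemma stationary_barx1b1 : 0 < vdot r1 r1 -> vdot x1 r1 = 0 ->
  vdot (sx1 F) r1 + vdot x1 (sr1 F) = 0 -> stationary_along F (barx1b1 b) s.
Proof. exact (vdot_div_vnorm_path_stationary _ _ _ _ _ _ sx1_along r1b1_along). Qed.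

Lemma stationary_barx2b2 : 0 < vdot r2 r2 -> vdot x2 r2 = 0 ->
  vdot (sx2 F) r2 + vdot x2 (sr2 F) = 0 -> stationary_along F (barx2b2 b) s.
Proof. exact (vdot_div_vnorm_path_stationary _ _ _ _ _ _ sx2_along r2b2_along). Qed.

Lemma stationary_rho1b1 : 0 < vdot r1 r1 -> vdot r1 (sr1 F) = 0 ->
  stationary_along F (rho1b1 b) s.
Proof. exact (vnorm_path_stationary _ _ _ r1b1_along). Qed.

Lemma stationary_rho2b2 : 0 < vdot r2 r2 -> vdot r2 (sr2 F) = 0 ->
  stationary_along F (rho2b2 b) s.
Proof. exact (vnorm_path_stationary _ _ _ r2b2_along). Qed.

End StationaryShapeVariables.

Lemma circling_equilibrium_of_first_order (mu lam a a0 : R) (s : State) :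
  let X1 := xdot1 mu lam a a0 0 s in
  let X2 := xdot2 mu lam a a0 0 s in
  let x1 := sx1 s in let x2 := sx2 s in
  let r := rrel s in let r1 := r1b1 0 s in let r2 := r2b2 0 s in
  vnorm x1 = 1 -> vnorm x2 = 1 ->
  0 < vdot r r -> 0 < vdot r1 r1 -> 0 < vdot r2 r2 ->
  vdot x1 r = 0 -> vdot x2 r = 0 -> vdot x1 r1 = 0 -> vdot x2 r2 = 0 ->
  vdot X1 r + vdot x1 (vsub x1 x2) = 0 ->
  vdot X2 r + vdot x2 (vsub x1 x2) = 0 ->
  vdot X1 r1 + vdot x1 x1 = 0 ->
  vdot X2 r2 + vdot x2 x2 = 0 ->
  vdot X1 x2 + vdot x1 X2 = 0 ->
  circling_equilibrium mu lam a a0 0 s.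
Proof.
  intros X1 X2 x1 x2 r r1 r2 Hx1 Hx2 Hr Hr1 Hr2 Hx1r Hx2r Hx1r1 Hx2r2
    Hbarx1 Hbarx2 Hbarx1b1 Hbarx2b2 Htildex.
  assert (Hbeacon_zero : forall v, vdot v (bhat 0) = 0).
  { intros [] ; unfold vdot, bhat, rb1, rb2, vsub; simpl; ring. }
  pose (F := field mu lam a a0 0 s).
  repeat split; try exact Hx1; try exact Hx2; try (apply vnorm_pos; assumption).
  repeat constructor.
  - exact (stationary_barx1 s F Hr Hx1r Hbarx1).
  - exact (stationary_barx2 s F Hr Hx2r Hbarx2).
  - exact (stationary_barx1b1 s F 0 Hr1 Hx1r1 Hbarx1b1).
  - exact (stationary_barx2b2 s F 0 Hr2 Hx2r2 Hbarx2b2).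
  - exact (stationary_tildex s F Htildex).
  - apply (stationary_rho s F Hr).
    change (vdot r (vsub x1 x2) = 0); rewrite vdot_vsub_r, (vdot_comm r x1), (vdot_comm r x2), Hx1r, Hx2r; ring.
  - apply (stationary_rho1b1 s F 0 Hr1).
    change (vdot r1 x1 = 0); rewrite vdot_comm; exact Hx1r1.
  - apply (stationary_rho2b2 s F 0 Hr2).
    change (vdot r2 x2 = 0); rewrite vdot_comm; exact Hx2r2.
  - apply (stationary_const s F _ 0); intro; apply Hbeacon_zero.
  - apply (stationary_const s F _ 0); intro; apply Hbeacon_zero.
  - apply (stationary_const s F _ 0); intro; apply Hbeacon_zero.
  - apply (stationary_const s F _ 0); intro; apply Hbeacon_zero.
Qed.

Lemma xdot1_of_bearings_zero (mu lam a a0 b : R) (s : State) :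
  barx1 s = 0 -> barx1b1 b s = 0 ->
  xdot1 mu lam a a0 b s =
  vadd (vscale (mu * (1 - lam) * a / rho s) (rrel s))
       (vscale (mu * lam * a0 / rho1b1 b s) (r1b1 b s)).
Proof.
  intros H H1; unfold xdot1; rewrite H, H1.
  unfold vadd, vscale, vsub; simpl; f_equal; unfold Rdiv; ring.
Qed.

Lemma xdot2_of_bearings_zero (mu lam a a0 b : R) (s : State) :
  barx2 s = 0 -> barx2b2 b s = 0 ->
  xdot2 mu lam a a0 b s =
  vadd (vscale (- (mu * (1 - lam) * a) / rho s) (rrel s))
       (vscale (mu * lam * a0 / rho2b2 b s) (r2b2 b s)).
Proof.
  intros H H2; unfold xdot2; rewrite H, H2.
  unfold vadd, vscale, vsub; simpl; f_equal; unfold Rdiv; ring.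
Qed.

Definition counter_rotating_state (R0 : R) : State :=
  mkS (mkV R0 0 0) (mkV (- R0) 0 0) (mkV 0 1 0) (mkV 0 (-1) 0).

Section CounterRotating.
Variables (R0 : R).
Hypothesis R0_pos : 0 < R0.
Let s := counter_rotating_state R0.

Lemma counter_rotating_rho : rho s = 2 * R0.
Proof. apply vnorm_eq; [lra | unfold vdot, rrel, vsub; simpl; ring]. Qed.

Lemma counter_rotating_rho1b1 : rho1b1 0 s = R0.
Proof. apply vnorm_eq; [lra | unfold vdot, r1b1, rb1, vsub; simpl; ring]. Qed.

Lemma counter_rotating_rho2b2 : rho2b2 0 s = R0.
Proof. apply vnorm_eq; [lra | unfold vdot, r2b2, rb2, vsub; simpl; ring]. Qed.

Lemma counter_rotating_bearings :
  barx1 s = 0 /\ barx2 s = 0 /\ barx1b1 0 s = 0 /\ barx2b2 0 s = 0.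
Proof.
  unfold barx1, barx2, barx1b1, barx2b2, vdot, rrel, r1b1, r2b2, rb1, rb2, vsub; simpl.
  repeat split; unfold Rdiv; ring.
Qed.

Lemma counter_rotating_equilibrium (mu lam a a0 : R) :
  mu * ((1 - lam) * a + lam * a0) * R0 = -1 ->
  circling_equilibrium mu lam a a0 0 s.
Proof.
  intros Hradius.
  destruct counter_rotating_bearings as (Hb1 & Hb2 & Hb1b1 & Hb2b2).
  (* Once denominators are cleared, every second-order condition is a multiple of
     [Hradius']. *)
  assert (Hradius' : (mu * ((1 - lam) * a + lam * a0) * R0 + 1) * R0 = 0)
    by (rewrite Hradius; ring).
  apply circling_equilibrium_of_first_order;
    try (apply vnorm_eq; [lra |]);
    try rewrite (xdot1_of_bearings_zero _ _ _ _ _ _ Hb1 Hb1b1);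
    try rewrite (xdot2_of_bearings_zero _ _ _ _ _ _ Hb2 Hb2b2);
    rewrite ?counter_rotating_rho, ?counter_rotating_rho1b1, ?counter_rotating_rho2b2;
    unfold vdot, vadd, vscale, rrel, r1b1, r2b2, rb1, rb2, vsub; simpl;
    try nra; field_simplify; try lra;
    unfold Rdiv; apply Rmult_eq_0_compat_r; lra.
Qed.

End CounterRotating.

Definition parallel_state (p q : R) : State :=
  mkS (mkV p q 0) (mkV (- p) q 0) (mkV 0 0 1) (mkV 0 0 1).

Section Parallel.
Variables (p q R1 : R).
Hypothesis p_pos : 0 < p.
Hypothesis R1_pos : 0 < R1.
Hypothesis R1_radius : p * p + q * q = R1 * R1.
Let s := parallel_state p q.

Lemma parallel_rho : rho s = 2 * p.
Proof. apply vnorm_eq; [lra | unfold vdot, rrel, vsub; simpl; ring]. Qed.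

Lemma parallel_rho1b1 : rho1b1 0 s = R1.
Proof. apply vnorm_eq; [lra | unfold vdot, r1b1, rb1, vsub; simpl; lra]. Qed.

Lemma parallel_rho2b2 : rho2b2 0 s = R1.
Proof. apply vnorm_eq; [lra | unfold vdot, r2b2, rb2, vsub; simpl; lra]. Qed.

Lemma parallel_bearings :
  barx1 s = 0 /\ barx2 s = 0 /\ barx1b1 0 s = 0 /\ barx2b2 0 s = 0.
Proof.
  unfold barx1, barx2, barx1b1, barx2b2, vdot, rrel, r1b1, r2b2, rb1, rb2, vsub; simpl.
  repeat split; unfold Rdiv; ring.
Qed.

Lemma parallel_equilibrium (mu lam a a0 : R) :
  mu * (1 - lam) * a * R1 + mu * lam * a0 * p = 0 ->
  mu * (1 - lam) * a * p + mu * lam * a0 * R1 + 1 = 0 ->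
  circling_equilibrium mu lam a a0 0 s.
Proof.
  intros Hrelative Hbeacon.
  destruct parallel_bearings as (Hb1 & Hb2 & Hb1b1 & Hb2b2).
  (* Once denominators are cleared, every second-order condition is a linear
     combination of these three products. *)
  assert (Hrelative' : (mu * (1 - lam) * a * R1 + mu * lam * a0 * p) * (p * p) = 0)
    by (rewrite Hrelative; ring).
  assert (Hbeacon' : (mu * (1 - lam) * a * p + mu * lam * a0 * R1 + 1) * (p * R1) = 0)
    by (rewrite Hbeacon; ring).
  assert (Hradius' : (p * p + q * q - R1 * R1) * (mu * lam * a0 * p) = 0)
    by (rewrite R1_radius; ring).
  apply circling_equilibrium_of_first_order;
    try (apply vnorm_eq; [lra |]);
    try rewrite (xdot1_of_bearings_zero _ _ _ _ _ _ Hb1 Hb1b1);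
    try rewrite (xdot2_of_bearings_zero _ _ _ _ _ _ Hb2 Hb2b2);
    rewrite ?parallel_rho, ?parallel_rho1b1, ?parallel_rho2b2;
    unfold vdot, vadd, vscale, rrel, r1b1, r2b2, rb1, rb2, vsub; simpl;
    try nra; field_simplify; try lra;
    unfold Rdiv; apply Rmult_eq_0_compat_r; lra.
Qed.

End Parallel.

Lemma counter_rotating_equilibrium_exists (mu lam a a0 : R) :
  0 < mu -> (1 - lam) * a + lam * a0 < 0 ->
  exists s : State, circling_equilibrium mu lam a a0 0 s /\
    barx1 s = 0 /\ barx2 s = 0 /\ barx1b1 0 s = 0 /\ barx2b2 0 s = 0 /\
    tildex s = -1 /\
    rho1b1 0 s = 1 / (- mu * ((1 - lam) * a + lam * a0)) /\
    rho2b2 0 s = 1 / (- mu * ((1 - lam) * a + lam * a0)) /\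
    rho s = 2 * rho1b1 0 s.
Proof.
  intros Hmu Hc.
  set (R0 := 1 / (- mu * ((1 - lam) * a + lam * a0))).
  assert (HR0 : 0 < R0) by (apply Rdiv_lt_0_compat; nra).
  assert (Hradius : mu * ((1 - lam) * a + lam * a0) * R0 = -1)
    by (unfold R0; field; nra).
  exists (counter_rotating_state R0).
  destruct (counter_rotating_bearings R0) as (Hb1 & Hb2 & Hb1b1 & Hb2b2).
  split; [exact (counter_rotating_equilibrium R0 HR0 mu lam a a0 Hradius) |].
  repeat split; try assumption.
  - unfold tildex, vdot; simpl; ring.
  - exact (counter_rotating_rho1b1 R0 HR0).
  - exact (counter_rotating_rho2b2 R0 HR0).
  - rewrite (counter_rotating_rho R0 HR0), (counter_rotating_rho1b1 R0 HR0); reflexivity.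
Qed.

Lemma parallel_equilibrium_exists (mu lam a a0 : R) :
  0 < mu -> 0 < lam < 1 -> (1 - lam) * a + lam * a0 < 0 -> a0 < 0 -> 0 < a ->
  exists s : State, circling_equilibrium mu lam a a0 0 s /\
    barx1 s = 0 /\ barx2 s = 0 /\ barx1b1 0 s = 0 /\ barx2b2 0 s = 0 /\
    tildex s = 1 /\
    rho1b1 0 s = lam * a0 / (mu * ((1 - lam) ^ 2 * a ^ 2 - lam ^ 2 * a0 ^ 2)) /\
    rho2b2 0 s = lam * a0 / (mu * ((1 - lam) ^ 2 * a ^ 2 - lam ^ 2 * a0 ^ 2)) /\
    rho s = -2 * (1 - lam) * a / (mu * ((1 - lam) ^ 2 * a ^ 2 - lam ^ 2 * a0 ^ 2)).
Proof.
  intros Hmu Hlam Hc Ha0 Ha.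
  set (D := (1 - lam) ^ 2 * a ^ 2 - lam ^ 2 * a0 ^ 2).
  assert (HD : mu * D < 0).
  { assert (Hfactor : D = ((1 - lam) * a - lam * a0) * ((1 - lam) * a + lam * a0))
      by (unfold D; ring).
    assert (Hgap : 0 < (1 - lam) * a - lam * a0) by nra.
    assert (HDneg : D < 0) by (rewrite Hfactor; nra).
    nra. }
  assert (HmuD : mu * D <> 0) by lra.
  assert (HD0 : D <> 0) by (intro HD0; rewrite HD0 in HmuD; lra).
  assert (Hmu0 : mu <> 0) by lra.
  set (R1 := lam * a0 / (mu * D)).
  set (p := - (1 - lam) * a / (mu * D)).
  assert (Hp : 0 < p).
  { unfold p; replace (- (1 - lam) * a / (mu * D)) with ((1 - lam) * a / - (mu * D))
      by (field; auto).
    apply Rdiv_lt_0_compat; nra. }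
  assert (HpR1 : p < R1).
  { assert (Hdiff : R1 - p = - ((1 - lam) * a + lam * a0) / - (mu * D))
      by (unfold R1, p; field; auto).
    assert (0 < - ((1 - lam) * a + lam * a0) / - (mu * D)) by (apply Rdiv_lt_0_compat; lra).
    lra. }
  assert (HR1 : 0 < R1) by lra.
  set (q := sqrt (R1 * R1 - p * p)).
  assert (Hradius : p * p + q * q = R1 * R1) by (unfold q; rewrite sqrt_sqrt; nra).
  exists (parallel_state p q).
  destruct (parallel_bearings p q) as (Hb1 & Hb2 & Hb1b1 & Hb2b2).
  split.
  { apply (parallel_equilibrium p q R1 Hp HR1 Hradius).
    - unfold R1, p; field; auto.
    - unfold R1, p, D; field; split; [| exact Hmu0].
      replace (((1 - lam) * a) ^ 2 - (lam * a0) ^ 2) with D by (unfold D; ring); exact HD0. }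
  repeat split; try assumption.
  - unfold tildex, vdot; simpl; ring.
  - exact (parallel_rho1b1 p q R1 HR1 Hradius).
  - exact (parallel_rho2b2 p q R1 HR1 Hradius).
  - rewrite (parallel_rho p q Hp); unfold p; field; auto.
Qed.

Theorem proposition4p2 (mu lam a a0 : R) :
  0 < mu -> 0 < lam < 1 -> -1 <= a <= 1 -> -1 <= a0 <= 1 -> a0 <> 0 ->
  ( (1 - lam) * a + lam * a0 < 0 ->
    exists s : State, circling_equilibrium mu lam a a0 0 s /\
      barx1 s = 0 /\ barx2 s = 0 /\ barx1b1 0 s = 0 /\ barx2b2 0 s = 0 /\
      tildex s = -1 /\
      rho1b1 0 s = 1 / (- mu * ((1 - lam) * a + lam * a0)) /\
      rho2b2 0 s = 1 / (- mu * ((1 - lam) * a + lam * a0)) /\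
      rho s = 2 * rho1b1 0 s )
  /\
  ( (1 - lam) * a + lam * a0 < 0 -> a0 < 0 -> 0 < a ->
    exists s : State, circling_equilibrium mu lam a a0 0 s /\
      barx1 s = 0 /\ barx2 s = 0 /\ barx1b1 0 s = 0 /\ barx2b2 0 s = 0 /\
      tildex s = 1 /\
      rho1b1 0 s = lam * a0 / (mu * ((1 - lam) ^ 2 * a ^ 2 - lam ^ 2 * a0 ^ 2)) /\
      rho2b2 0 s = lam * a0 / (mu * ((1 - lam) ^ 2 * a ^ 2 - lam ^ 2 * a0 ^ 2)) /\
      rho s = -2 * (1 - lam) * a / (mu * ((1 - lam) ^ 2 * a ^ 2 - lam ^ 2 * a0 ^ 2)) ).
Proof.
  intros Hmu Hlam _ _ _; split.
  - exact (counter_rotating_equilibrium_exists mu lam a a0 Hmu).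
  - exact (parallel_equilibrium_exists mu lam a a0 Hmu Hlam).
Qed.
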